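(* Let $G\in[0,1]^{Q\times Q}$ be a stochastic matrix ($G\vec 1=\vec 1$) over a finite set $Q$ such that the directed graph of $G$ (edge $p\to q$ iff $G[p,q]>0$) has exactly one bottom strongly connected component, and let $y_{\min}$ be the smallest nonzero entry of $G$. Let $\vec r\in\mathbb{R}^Q$ and $\vec f(n)=\sum_{i=0}^{n-1}G^i\vec r$ for $n\in\mathbb{N}$. For $\vec v\in\mathbb{R}^Q$ put $|\vec v|_{\mathit{diff}}=\max_{p_1,p_2\in Q}|\vec v[p_1]-\vec v[p_2]|$. Then $|\vec f(n)|_{\mathit{diff}}\le C\,|\vec r|_{\mathit{diff}}$ for all $n\in\mathbb{N}$, where $C=10|Q|/y_{\min}^{|Q|}$.
   Context: Bottom strongly connected component: a strongly connected component of the graph with no edges leaving it. *)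

From HB Require Import structures.
From mathcomp Require Import all_boot all_order all_algebra.
Set Implicit Arguments. Unset Strict Implicit. Unset Printing Implicit Defensive.
Import Order.TTheory GRing.Theory Num.Theory.
Local Open Scope ring_scope.

(* Q is represented as 'I_n, so |Q| = n. *)

Definition stochastic (R : realFieldType) (n : nat) (G : 'M[R]_n) : Prop :=
  (forall p q, 0 <= G p q <= 1) /\ (forall p, \sum_(q < n) G p q = 1).

Definition gedge (R : realFieldType) (n : nat) (G : 'M[R]_n) : rel 'I_n :=
  fun p q => 0 < G p q.

Definition is_scc (n : nat) (e : rel 'I_n) (S : {set 'I_n}) : Prop :=
  S != set0 /\
  (forall x, x \in S -> forall y, (y \in S) = (connect e x y && connect e y x)).

Definition is_bottom_scc (n : nat) (e : rel 'I_n) (S : {set 'I_n}) : Prop :=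
  is_scc e S /\ (forall x y, x \in S -> e x y -> y \in S).

Definition unique_bottom_scc (n : nat) (e : rel 'I_n) : Prop :=
  exists S, is_bottom_scc e S /\ (forall S', is_bottom_scc e S' -> S' = S).

(* Smallest nonzero entry of G (default 1 is harmless: entries are <= 1 and a
   stochastic matrix over a nonempty Q has a nonzero entry). *)
Definition ymin (R : realFieldType) (n : nat) (G : 'M[R]_n) : R :=
  \big[Num.min/1]_(p < n) \big[Num.min/1]_(q < n | G p q != 0) G p q.

Definition mxpow (R : realFieldType) (n : nat) (G : 'M[R]_n) (i : nat) : 'M[R]_n :=
  iter i (mulmx G) 1%:M.

Definition fsum (R : realFieldType) (n : nat) (G : 'M[R]_n) (r : 'cV[R]_n) (k : nat)
  : 'cV[R]_n := \sum_(i < k) (mxpow G i *m r).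

Definition diffnorm (R : realFieldType) (n : nat) (v : 'cV[R]_n) : R :=
  \big[Num.max/0]_(p1 < n) \big[Num.max/0]_(p2 < n) `|v p1 0 - v p2 0|.

(** Every vertex of the graph of [G] reaches one fixed vertex [s] of the bottom
    SCC, hence reaches it within [|Q|] steps each of probability at least
    [ymin].  Weighting the BFS levels towards [s] by powers of [1/ymin] yields a
    potential [phi] with [0 <= phi <= |Q|/ymin^|Q|] and [1 + G phi <= phi] off
    [s].  The increments [f(k+1) - f(k) = G^k r] all lie in the range of [r],
    and an induction on [k] with [phi] as drift function shows
    [|f(k)[p] - f(k)[s]| <= |r|_diff * 2 phi(p)]; the triangle inequality
    through [s] concludes. *)
From HB Require Import structures.
From mathcomp Require Import all_boot all_order all_algebra.
From mathcomp Require Import ring lra zify.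
Import Order.TTheory GRing.Theory Num.Theory.

Set Implicit Arguments.
Unset Strict Implicit.
Unset Printing Implicit Defensive.

Section BottomScc.

Variables (n : nat) (e : rel 'I_n).

Lemma reaches_bottom_scc (p : 'I_n) :
  exists2 x, connect e p x & is_bottom_scc e [set y | connect e x y].
Proof.
pose reach x := [set y | connect e x y].
case: (arg_minnP (fun x => #|reach x|) (connect0 e p)) => x px xmin.
exists x => //.
have back y : connect e x y -> connect e y x.
  move=> xy.
  have sub : reach y \subset reach x.
    by apply/subsetP=> z; rewrite !inE; exact: connect_trans.
  have /eqP eq_reach : reach y == reach x.
    by rewrite eqEcard sub xmin //; exact: connect_trans px xy.
  have : x \in reach y by rewrite eq_reach inE connect0.
  by rewrite inE.
split; [split|].
- by apply/set0Pn; exists x; rewrite inE connect0.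
- move=> z; rewrite inE => xz y; rewrite inE.
  apply/idP/andP => [xy | [zy _]]; last exact: connect_trans xz zy.
  by split; [exact: connect_trans (back _ xz) xy | exact: connect_trans (back _ xy) xz].
- move=> z y; rewrite !inE => xz ezy.
  exact: connect_trans xz (connect1 ezy).
Qed.

Lemma unique_bottom_scc_sink :
  unique_bottom_scc e -> exists s, forall p, connect e p s.
Proof.
case=> S [[[/set0Pn [s sS] _] _] uniqS]; exists s => p.
case: (reaches_bottom_scc p) => x px /uniqS eqS.
by move: sS; rewrite -eqS inE; exact: connect_trans.
Qed.

End BottomScc.

Local Open Scope ring_scope.

Section Stochastic.

Variables (R : realFieldType) (n : nat) (G : 'M[R]_n).
Hypotheses (G_ge0 : forall p q, 0 <= G p q) (G_rowsum : forall p, \sum_q G p q = 1).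

Lemma row_avg_affine p (c d : R) (phi : 'I_n -> R) :
  \sum_q G p q * (c + d * phi q) = c + d * \sum_q G p q * phi q.
Proof.
under eq_bigr do rewrite mulrDr mulrCA.
by rewrite big_split /= -mulr_suml G_rowsum mul1r -mulr_sumr.
Qed.

Lemma row_avg_bounds p (a b : R) (v : 'I_n -> R) :
  (forall q, a <= v q <= b) -> a <= \sum_q G p q * v q <= b.
Proof.
move=> vab; have const c : c = \sum_q G p q * c by rewrite -mulr_suml G_rowsum mul1r.
apply/andP; split; [rewrite [a]const | rewrite [b]const]; apply: ler_sum => q _;
  by apply: ler_wpM2l => //; case/andP: (vab q).
Qed.

Lemma mxpow_mul_bounds (r : 'cV[R]_n) (a b : R) :
  (forall p, a <= r p 0 <= b) -> forall k p, a <= (mxpow G k *m r) p 0 <= b.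
Proof.
move=> rab; elim=> [|k IH] p; first by rewrite /mxpow /= mul1mx.
rewrite /mxpow iterS -/(mxpow G k) -mulmxA mxE.
exact: row_avg_bounds.
Qed.

End Stochastic.

Lemma ymin_gt0 (R : realFieldType) n (G : 'M[R]_n) :
  (forall p q, 0 <= G p q) -> 0 < ymin G.
Proof.
move=> G_ge0; apply: lt_bigmin => // p _; apply: lt_bigmin => // q /= Gpq.
by rewrite lt_neqAle eq_sym Gpq G_ge0.
Qed.

Lemma ymin_le1 (R : realFieldType) n (G : 'M[R]_n) : ymin G <= 1.
Proof. exact: bigmin_le_id. Qed.

Lemma ymin_le_pos_entry (R : realFieldType) n (G : 'M[R]_n) p q :
  0 < G p q -> ymin G <= G p q.
Proof.
move=> Gpq; apply: le_trans (bigmin_le _ p _) _.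
by apply: bigmin_le_cond; rewrite gt_eqF.
Qed.

Section Potential.

Variables (R : realFieldType) (n : nat) (G : 'M[R]_n) (s : 'I_n) (y : R).
Hypotheses (G_ge0 : forall p q, 0 <= G p q) (G_rowsum : forall p, \sum_q G p q = 1).
Hypotheses (y_gt0 : 0 < y) (y_le1 : y <= 1).
Hypothesis y_le_pos_entry : forall p q, 0 < G p q -> y <= G p q.
Hypothesis reach_s : forall p, connect (gedge G) p s.

(* [level k] is the set of vertices at distance less than [k] from [s]. *)
Definition level (k : nat) : {set 'I_n} :=
  iter k (fun X : {set 'I_n} => s |: [set p | [exists q in X, gedge G p q]]) set0.

Lemma level_full p : p \in level n.
Proof.
pose F (X : {set 'I_n}) := s |: [set p | [exists q in X, gedge G p q]].
have F_mono : {homo F : X Y / X \subset Y}.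
  move=> X Y XY; apply/subsetP => p'; rewrite !inE.
  case/orP=> [-> // | /existsP [q /andP [qX Gpq]]].
  by apply/orP; right; apply/existsP; exists q; rewrite Gpq (subsetP XY).
have fixed : F (level n) = level n.
  by have := fixsetK F_mono; rewrite /fixset card_ord.
case/connectP: (reach_s p) => l; elim: l p => [|q l IH] p /=.
  by move=> _ <-; rewrite -fixed !inE eqxx.
case/andP=> Gpq ql /(IH q ql) qn.
by rewrite -fixed !inE; apply/orP; right; apply/existsP; exists q; rewrite qn.
Qed.

Lemma level_step k p :
  p \in level k.+1 -> p != s -> exists2 q, q \in level k & y <= G p q.
Proof.
rewrite /= !inE => /orP [/eqP -> | /existsP [q /andP [qX Gpq]]]; first by rewrite eqxx.
by exists q => //; exact: y_le_pos_entry.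
Qed.

Definition weight p : R :=
  \sum_(0 <= k < n) y^-1 ^+ (n - k) * (p \in level k)%:R.

Lemma weight_bounds p : 0 <= weight p <= n%:R * y^-1 ^+ n.
Proof.
have yV_ge1 : 1 <= y^-1 by rewrite invf_ge1.
apply/andP; split; first by apply: sumr_ge0 => k _; rewrite mulr_ge0 ?exprn_ge0 ?ler0n //; lra.
have -> : n%:R * y^-1 ^+ n = \sum_(0 <= k < n) y^-1 ^+ n.
  by rewrite sumr_const_nat subn0 mulr_natl.
apply: ler_sum => k _.
apply: le_trans (_ : y^-1 ^+ (n - k) <= _); last by rewrite ler_weXn2l ?leq_subr.
by rewrite ler_piMr ?exprn_ge0 //; [lra | case: (_ \in _)].
Qed.

Lemma level_succ_mass k p : p != s ->
  y * (p \in level k.+1)%:R <= \sum_q G p q * (q \in level k)%:R.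
Proof.
move=> ps; have mass_ge0 q : 0 <= G p q * (q \in level k)%:R by rewrite mulr_ge0.
have [/level_step/(_ ps) [q qk yGpq] | _] := boolP (p \in level k.+1); last first.
  by rewrite mulr0 sumr_ge0.
by rewrite mulr1 (bigD1 q) //= qk mulr1 -[y]addr0 lerD // sumr_ge0.
Qed.

(* The weights [y^-(n-k)] are chosen so that one step of [G] towards [s]
   gains a factor [y], which [level_succ_mass] pays for. *)
Lemma weight_increase p : p != s -> weight p + 1 <= \sum_q G p q * weight q.
Proof.
move=> ps.
have -> : \sum_q G p q * weight q =
    \sum_(0 <= k < n) y^-1 ^+ (n - k) * \sum_q G p q * (q \in level k)%:R.
  under eq_bigr do rewrite /weight mulr_sumr.
  rewrite exchange_big /=; apply: eq_bigr => k _; rewrite mulr_sumr.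
  by apply: eq_bigr => q _; rewrite mulrCA.
have shift : weight p + 1 =
    \sum_(0 <= k < n) y^-1 ^+ (n - k.+1) * (p \in level k.+1)%:R.
  have := @big_nat_recl R 0 +%R n 0 (fun k => y^-1 ^+ (n - k) * (p \in level k)%:R) isT.
  rewrite big_nat_recr //= in_set0 mulr0 add0r => <-.
  by rewrite level_full subnn expr0 mulr1.
rewrite shift big_nat_cond [X in _ <= X]big_nat_cond.
apply: ler_sum => k /andP [/andP [_ kn] _].
have -> : y^-1 ^+ (n - k) = y^-1 ^+ (n - k.+1) * y^-1.
  by rewrite -exprSr; congr (_ ^+ _); lia.
rewrite -mulrA; apply: ler_wpM2l; first by rewrite exprn_ge0 // invr_ge0 ltW.
by rewrite ler_pdivlMl // level_succ_mass.
Qed.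

Definition potential p : R := n%:R * y^-1 ^+ n - weight p.

Lemma potential_bounds p : 0 <= potential p <= n%:R * y^-1 ^+ n.
Proof. by have := weight_bounds p; rewrite /potential; case/andP => *; apply/andP; lra. Qed.

Lemma potential_superharmonic p :
  p != s -> 1 + \sum_q G p q * potential q <= potential p.
Proof.
move=> /weight_increase w_incr; rewrite /potential.
under eq_bigr do rewrite -mulN1r.
by rewrite row_avg_affine //; lra.
Qed.

End Potential.

Lemma fsumS (R : realFieldType) n (G : 'M[R]_n) (r : 'cV[R]_n) k :
  fsum G r k.+1 = r + G *m fsum G r k.
Proof.
rewrite /fsum big_ord_recl /= /mxpow /= mul1mx mulmx_sumr; congr (_ + _).
by apply: eq_bigr => i _; rewrite mulmxA.
Qed.

Lemma fsumSr (R : realFieldType) n (G : 'M[R]_n) (r : 'cV[R]_n) k :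
  fsum G r k.+1 = fsum G r k + mxpow G k *m r.
Proof. by rewrite /fsum big_ord_recr. Qed.

Section Deviation.

Variables (R : realFieldType) (n : nat) (G : 'M[R]_n) (r : 'cV[R]_n).
Variables (s : 'I_n) (phi : 'I_n -> R) (a b : R).
Hypotheses (G_ge0 : forall p q, 0 <= G p q) (G_rowsum : forall p, \sum_q G p q = 1).
Hypothesis phi_ge0 : forall p, 0 <= phi p.
Hypothesis phi_superharmonic : forall p, p != s -> 1 + \sum_q G p q * phi q <= phi p.
Hypothesis r_bounds : forall p, a <= r p 0 <= b.

(* [f(k+1)[p] - f(k+1)[s] = (r[p] - (G^k r)[s]) + ((G f(k))[p] - f(k)[s])]: the
   first term is at most [b - a] in absolute value and the second is a
   [G]-average of deviations from [f(k)[s]], so superharmonicity of [phi]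
   absorbs both. *)
Lemma fsum_deviation_bound k p :
  `|fsum G r k p 0 - fsum G r k s 0| <= (b - a) * phi p.
Proof.
have ab_ge0 : 0 <= b - a by case/andP: (r_bounds s) => *; lra.
elim: k p => [|k IH] p; first by rewrite /fsum big_ord0 !mxE subrr normr0 mulr_ge0.
have [-> | ps] := eqVneq p s; first by rewrite subrr normr0 mulr_ge0.
set f := fsum G r k.
have avg_dev : `|\sum_q G p q * f q 0 - f s 0| <= (b - a) * \sum_q G p q * phi q.
  have -> : \sum_q G p q * f q 0 - f s 0 = \sum_q G p q * (- f s 0 + 1 * f q 0).
    by rewrite row_avg_affine // mul1r addrC.
  apply: le_trans (ler_norm_sum _ _ _) _; rewrite mulr_sumr; apply: ler_sum => q _.
  by rewrite normrM ger0_norm // mulrCA ler_wpM2l // mul1r addrC IH.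
have inc_dev : `|r p 0 - (mxpow G k *m r) s 0| <= b - a.
  case/andP: (mxpow_mul_bounds G_ge0 G_rowsum r_bounds k s) => *.
  by case/andP: (r_bounds p) => *; rewrite ler_norml; apply/andP; split; lra.
have -> : fsum G r k.+1 p 0 - fsum G r k.+1 s 0 =
    (r p 0 - (mxpow G k *m r) s 0) + (\sum_q G p q * f q 0 - f s 0).
  by rewrite {1}fsumS fsumSr !mxE -/f; ring.
apply: le_trans (ler_normD _ _) _.
apply: le_trans (_ : _ <= (b - a) * (1 + \sum_q G p q * phi q)) _.
  by rewrite mulrDr mulr1 lerD.
by rewrite ler_wpM2l // phi_superharmonic.
Qed.

End Deviation.

Lemma diffnorm_entry (R : realFieldType) n (v : 'cV[R]_n) p1 p2 :
  `|v p1 0 - v p2 0| <= diffnorm v.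
Proof.
apply: le_trans (le_bigmax _ _ p1).
exact: (le_bigmax _ (fun p2 => `|v p1 0 - v p2 0|) p2).
Qed.

Lemma diffnorm_le_deviation (R : realFieldType) n (v : 'cV[R]_n) (s : 'I_n) (c : R) :
  (forall p, `|v p 0 - v s 0| <= c) -> diffnorm v <= 2 * c.
Proof.
move=> dev; have c_ge0 : 0 <= c by apply: le_trans (dev s); rewrite normr_ge0.
apply: bigmax_le => [|p1 _]; first by rewrite mulr_ge0.
apply: bigmax_le => [|p2 _]; first by rewrite mulr_ge0.
have := ler_normB (v p1 0 - v s 0) (v p2 0 - v s 0).
rewrite opprB addrA subrK => tri.
by apply: le_trans tri _; rewrite mulr2n mulrDl mul1r lerD.
Qed.

Theorem mainTheorem19 (R : realFieldType) (n : nat) (G : 'M[R]_n) (r : 'cV[R]_n)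
  (hG : stochastic G) (hB : unique_bottom_scc (gedge G)) :
  forall k : nat,
    diffnorm (fsum G r k) <= (10 * n%:R / ymin G ^+ n) * diffnorm r.
Proof.
move=> k; case: hG => G_bounds G_rowsum.
have G_ge0 p q : 0 <= G p q by case/andP: (G_bounds p q).
case: (unique_bottom_scc_sink hB) => s reach_s.
have y_gt0 := ymin_gt0 G_ge0.
have phi_bounds := potential_bounds G s y_gt0 (ymin_le1 G).
have phi_super := potential_superharmonic G_ge0 G_rowsum y_gt0 (ymin_le1 G)
  (@ymin_le_pos_entry _ _ G) reach_s.
set K := n%:R * (ymin G)^-1 ^+ n in phi_bounds.
set D := diffnorm r.
have D_ge0 : 0 <= D by apply: le_trans (diffnorm_entry r s s).
have r_bounds p : r s 0 - D <= r p 0 <= r s 0 + D.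
  by have := diffnorm_entry r p s; rewrite -/D ler_norml => /andP [? ?]; apply/andP; split; lra.
have dev p : `|fsum G r k p 0 - fsum G r k s 0| <= 2 * D * K.
  apply: le_trans (fsum_deviation_bound G_ge0 G_rowsum (fun q => proj1 (andP (phi_bounds q)))
    phi_super r_bounds k p) _.
  have -> : r s 0 + D - (r s 0 - D) = 2 * D by ring.
  by apply: ler_wpM2l; [rewrite mulr_ge0 | case/andP: (phi_bounds p)].
apply: le_trans (diffnorm_le_deviation dev) _.
have DK_ge0 : 0 <= D * K by rewrite mulr_ge0 //; case/andP: (phi_bounds s) => *; lra.
rewrite -(mulrA 10) -exprVn -/K.
by clearbody K D; clear -DK_ge0; lra.
Qed.
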